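(* Let $R$ be a finite commutative ring. Then $R$ is an avoidance ring if and only if $R$ is a principal ideal ring.
   Context: All rings are commutative with $1\neq 0$. An ideal $I$ of a ring $R$ has avoidance if whenever $I_1,\ldots,I_n$ are finitely many ideals of $R$ with $I\subseteq\bigcup_{k=1}^n I_k$, then $I\subseteq I_k$ for some $k$. A ring is an avoidance ring if every ideal of it has avoidance. *)

From mathcomp Require Import all_boot all_algebra.
Set Implicit Arguments. Unset Strict Implicit. Unset Printing Implicit Defensive.
Import GRing.Theory.
Local Open Scope ring_scope.

Definition is_ideal (R : finComNzRingType) (I : {set R}) : Prop :=
  0 \in I /\
  (forall x y, x \in I -> y \in I -> x + y \in I) /\
  (forall r x, x \in I -> r * x \in I).

Definition has_avoidance (R : finComNzRingType) (I : {set R}) : Prop :=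
  forall s : seq {set R}, (forall J, J \in s -> is_ideal J) ->
    I \subset \bigcup_(J <- s) J -> exists2 J, J \in s & I \subset J.

Definition avoidance_ring (R : finComNzRingType) : Prop :=
  forall I : {set R}, is_ideal I -> has_avoidance I.

Definition principal_ideal (R : finComNzRingType) (a : R) : {set R} :=
  [set r * a | r : R].

Definition principal_ideal_ring (R : finComNzRingType) : Prop :=
  forall I : {set R}, is_ideal I -> exists a : R, I = principal_ideal a.

From mathcomp Require Import all_boot all_algebra.
Set Implicit Arguments. Unset Strict Implicit. Unset Printing Implicit Defensive.
Import GRing.Theory.
Local Open Scope ring_scope.

(* An ideal I is the union of the principal ideals of its elements. If I has
   avoidance, it lies in one of them, so it is principal. Conversely a
   principal ideal (a) lies in an ideal J as soon as a does, so covering (a)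
   by finitely many ideals forces (a) into the one containing a. Finiteness of
   R is only used to make the union over the elements of I finite. *)

Section PrincipalIdeals.

Variable R : finComNzRingType.
Implicit Types (a : R) (I J : {set R}).

Lemma principal_ideal_is_ideal a : is_ideal (principal_ideal a).
Proof.
split; first by apply/imsetP; exists 0; rewrite ?mul0r.
split=> [_ _ /imsetP[r _ ->] /imsetP[r' _ ->]|r _ /imsetP[r' _ ->]].
  by apply/imsetP; exists (r + r'); rewrite ?mulrDl.
by apply/imsetP; exists (r * r'); rewrite ?mulrA.
Qed.

Lemma mem_principal_ideal a : a \in principal_ideal a.
Proof. by apply/imsetP; exists 1; rewrite ?mul1r. Qed.

Lemma principal_ideal_sub a I :
  is_ideal I -> (principal_ideal a \subset I) = (a \in I).
Proof.
move=> [_ [_ mulI]]; apply/subsetP/idP => [-> //|aI _ /imsetP[r _ ->]].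
  exact: mem_principal_ideal.
exact: mulI.
Qed.

Lemma principal_ideal_has_avoidance a : has_avoidance (principal_ideal a).
Proof.
rewrite /has_avoidance => s idl_s /subsetP/(_ a (mem_principal_ideal a)).
rewrite bigcup_seq => /bigcupP[J Js aJ].
by exists J; rewrite // principal_ideal_sub //; apply: idl_s.
Qed.

Lemma ideal_sub_bigcup_principal I :
  I \subset \bigcup_(J <- [seq principal_ideal a | a <- enum I]) J.
Proof.
apply/subsetP=> x xI; rewrite bigcup_seq; apply/bigcupP.
exists (principal_ideal x); last exact: mem_principal_ideal.
by apply/mapP; exists x; rewrite ?mem_enum.
Qed.

Lemma avoidance_ideal_principal I :
  is_ideal I -> has_avoidance I -> exists a, I = principal_ideal a.
Proof.
move=> idI /(_ _ _ (ideal_sub_bigcup_principal I)) [|J].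
  by move=> _ /mapP[a _ ->]; apply: principal_ideal_is_ideal.
move=> /mapP[a aI ->] IsubJ; exists a; apply/eqP.
by rewrite eqEsubset IsubJ principal_ideal_sub // -mem_enum.
Qed.

End PrincipalIdeals.

Theorem proposition3p17 (R : finComNzRingType) :
  avoidance_ring R <-> principal_ideal_ring R.
Proof.
split=> [avR I idI|pirR I idI]; first exact: avoidance_ideal_principal (avR I idI).
by have [a ->] := pirR I idI; apply: principal_ideal_has_avoidance.
Qed.
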